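(* Let $\mathcal{C}$ be a deflation-exact category and $\mathcal{A}$ an admissibly deflation-percolating subcategory. Let $f\colon X\to Y$ be an admissible morphism whose kernel and cokernel lie in $\mathcal{A}$, and let $g\colon X\to A$ be any morphism with $A\in\mathcal{A}$. Then the pushout of $f$ along $g$ exists, and the induced morphism $A\to P$ (where $P$ is the pushout) is admissible with kernel and cokernel in $\mathcal{A}$.
   Context: A conflation category is an additive category with a class of kernel-cokernel pairs (closed under isomorphisms) called conflations; first map an inflation, second a deflation. A deflation-exact category is a conflation category satisfying: (R0) $1_0$ is a deflation; (R1) composites of deflations are deflations; (R2) pullbacks of deflations along arbitrary morphisms exist and are deflations. A morphism is admissible if it factors as a deflation followed by an inflation. A non-empty full subcategory $\mathcal{A}$ is admissibly deflation-percolating if: (A1) for every conflation $A'\rightarrowtail A\twoheadrightarrow A''$, $A\in\mathcal{A}$ iff $A',A''\in\mathcal{A}$; (A2) every morphism $C\to A$ with $A\in\mathcal{A}$ factors as a deflation $C\twoheadrightarrow A'$ followed by an inflation $A'\rightarrowtail A$ with $A'\in\mathcal{A}$; (A3) if $a\colon C\rightarrowtail D$ is an inflation and $b\colon C\twoheadrightarrow A$ a deflation with $A\in\mathcal{A}$, the pushout of $a$ along $b$ exists and yields a deflation $D\twoheadrightarrow P$ and an inflation $A\rightarrowtail P$. *)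

From HB Require Import structures.
From mathcomp Require Import all_boot all_algebra.
Set Implicit Arguments. Unset Strict Implicit. Unset Printing Implicit Defensive.
Import GRing.Theory.
Local Open Scope ring_scope.

Record AddCat := {
  ob :> Type;
  mor : ob -> ob -> zmodType;
  idm : forall X, mor X X;
  mcomp : forall X Y Z, mor Y Z -> mor X Y -> mor X Z;   (* mcomp g f = g o f *)
  compA : forall X Y Z W (h : mor Z W) (g : mor Y Z) (f : mor X Y),
      mcomp h (mcomp g f) = mcomp (mcomp h g) f;
  comp1m : forall X Y (f : mor X Y), mcomp (idm Y) f = f;
  compm1 : forall X Y (f : mor X Y), mcomp f (idm X) = f;
  compDl : forall X Y Z (g1 g2 : mor Y Z) (f : mor X Y),
      mcomp (g1 + g2) f = mcomp g1 f + mcomp g2 f;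
  compDr : forall X Y Z (g : mor Y Z) (f1 f2 : mor X Y),
      mcomp g (f1 + f2) = mcomp g f1 + mcomp g f2;
  zero_obj_ex : exists Z : ob, idm Z = 0;
  biprod_ex : forall X Y : ob, exists (W : ob) (i1 : mor X W) (i2 : mor Y W)
      (p1 : mor W X) (p2 : mor W Y),
      [/\ mcomp p1 i1 = idm X, mcomp p2 i2 = idm Y &
          mcomp i1 p1 + mcomp i2 p2 = idm W]
}.
Arguments mor {C} : rename.
Arguments idm {C} : rename.
Arguments mcomp {C X Y Z} : rename.

Section Notions.
Variable C : AddCat.

Definition is_zero_obj (Z : C) : Prop := idm Z = 0.

Definition is_kernel (X Y K : C) (f : mor X Y) (k : mor K X) : Prop :=
  mcomp f k = 0 /\
  forall (T : C) (t : mor T X), mcomp f t = 0 ->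
    exists u : mor T K, mcomp k u = t /\ forall u' : mor T K, mcomp k u' = t -> u' = u.

Definition is_cokernel (X Y Q : C) (f : mor X Y) (c : mor Y Q) : Prop :=
  mcomp c f = 0 /\
  forall (T : C) (t : mor Y T), mcomp t f = 0 ->
    exists u : mor Q T, mcomp u c = t /\ forall u' : mor Q T, mcomp u' c = t -> u' = u.

Definition kernel_cokernel_pair (A B D : C) (i : mor A B) (p : mor B D) : Prop :=
  is_kernel p i /\ is_cokernel i p.

Definition is_iso (X Y : C) (f : mor X Y) : Prop :=
  exists g : mor Y X, mcomp g f = idm X /\ mcomp f g = idm Y.

(* commutative square  B' --f'--> B ; B' --p'--> C' ; B --p--> D ; C' --f--> D
   is a pullback of p along f *)
Definition is_pullback (B D C' B' : C) (p : mor B D) (f : mor C' D)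
    (f' : mor B' B) (p' : mor B' C') : Prop :=
  mcomp p f' = mcomp f p' /\
  forall (T : C) (x : mor T B) (y : mor T C'), mcomp p x = mcomp f y ->
    exists u : mor T B', (mcomp f' u = x /\ mcomp p' u = y) /\
      forall u' : mor T B', mcomp f' u' = x /\ mcomp p' u' = y -> u' = u.

Definition is_pushout (X Y A P : C) (a : mor X Y) (b : mor X A)
    (b' : mor Y P) (a' : mor A P) : Prop :=
  mcomp b' a = mcomp a' b /\
  forall (T : C) (x : mor Y T) (y : mor A T), mcomp x a = mcomp y b ->
    exists u : mor P T, (mcomp u b' = x /\ mcomp u a' = y) /\
      forall u' : mor P T, mcomp u' b' = x /\ mcomp u' a' = y -> u' = u.

End Notions.

Record ConfCat := {
  cat :> AddCat;
  conf : forall A B D : cat, mor A B -> mor B D -> Prop;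
  conf_kc : forall (A B D : cat) (i : mor A B) (p : mor B D),
      conf i p -> kernel_cokernel_pair i p;
  conf_iso : forall (A B D A' B' D' : cat) (i : mor A B) (p : mor B D)
      (i' : mor A' B') (p' : mor B' D') (a : mor A A') (b : mor B B') (d : mor D D'),
      conf i p -> is_iso a -> is_iso b -> is_iso d ->
      mcomp b i = mcomp i' a -> mcomp d p = mcomp p' b -> conf i' p'
}.
Arguments conf {c A B D} : rename.

Section Exact.
Variable C : ConfCat.

Definition inflation (A B : C) (i : mor A B) : Prop :=
  exists (D : C) (p : mor B D), conf i p.
Definition deflation (B D : C) (p : mor B D) : Prop :=
  exists (A : C) (i : mor A B), conf i p.

Definition deflation_exact : Prop :=
  (forall Z : C, is_zero_obj Z -> deflation (idm Z)) /\
  (forall (X Y Z : C) (p : mor X Y) (q : mor Y Z),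
              deflation p -> deflation q -> deflation (mcomp q p)) /\
  (forall (B D C' : C) (p : mor B D) (f : mor C' D), deflation p ->
              exists (B' : C) (f' : mor B' B) (p' : mor B' C'),
                is_pullback p f f' p' /\ deflation p').

Definition admissible (X Y : C) (f : mor X Y) : Prop :=
  exists (I : C) (d : mor X I) (i : mor I Y), deflation d /\ inflation i /\ f = mcomp i d.

Definition adm_defl_percolating (inA : C -> Prop) : Prop :=
  (exists A : C, inA A) /\
  (forall (A' A A'' : C) (i : mor A' A) (p : mor A A''), conf i p ->
              (inA A <-> inA A' /\ inA A'')) /\
  (forall (D A : C) (h : mor D A), inA A ->
              exists (A' : C) (d : mor D A') (i : mor A' A),
                [/\ deflation d, inflation i, inA A' & h = mcomp i d]) /\
  (forall (D E A : C) (a : mor D E) (b : mor D A),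
              inflation a -> deflation b -> inA A ->
              exists (P : C) (b' : mor E P) (a' : mor A P),
                [/\ is_pushout a b b' a', deflation b' & inflation a']).

Definition ker_coker_in (inA : C -> Prop) (X Y : C) (f : mor X Y) : Prop :=
  (exists (K : C) (k : mor K X), is_kernel f k /\ inA K) /\
  (exists (Q : C) (c : mor Y Q), is_cokernel f c /\ inA Q).

End Exact.

(** Factor [f = i ∘ d] with [d] a deflation and [i] an inflation. By (A2) the
    composite of [g] with the kernel of [d] factors through an inflation
    [j : A'' ↣ A] with cokernel [r : A ↠ R], and [R] lies in [A] by (A1); so
    [r g] descends along [d] to [g1 : I → R], and the square [(d, g, g1, r)] is
    a pushout. The pushout of the inflation [i] along [g1] is obtained from
    (A3): it is the pushout of the inflation [[i 0; -g1 1] : I ⊕ R ↣ Y ⊕ R]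
    along the projection [I ⊕ R ↠ R], and its edge [a : R ↣ P] is an
    inflation with the same cokernel as [i], i.e. as [f]. Pasting the two
    pushouts gives the pushout of [f] along [g]; its edge [a ∘ r] from [A] is
    admissible, with kernel [j] and cokernel that of [a]. *)
From mathcomp Require Import all_boot all_algebra.
Set Implicit Arguments. Unset Strict Implicit. Unset Printing Implicit Defensive.
Import GRing.Theory.
Local Open Scope ring_scope.

Local Notation "g ⊙ f" := (mcomp g f) (at level 40, left associativity).

Section AdditiveCategory.
Variable C : AddCat.

Lemma comp0m (X Y Z : C) (f : mor X Y) : (0 : mor Y Z) ⊙ f = 0.
Proof.
have H := compDl (0 : mor Y Z) 0 f; rewrite addr0 in H.
by apply: (addrI (0 ⊙ f)); rewrite addr0 -H.
Qed.

Lemma compm0 (X Y Z : C) (g : mor Y Z) : g ⊙ (0 : mor X Y) = 0.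
Proof.
have H := compDr g (0 : mor X Y) 0; rewrite addr0 in H.
by apply: (addrI (g ⊙ 0)); rewrite addr0 -H.
Qed.

Lemma compNl (X Y Z : C) (g : mor Y Z) (f : mor X Y) : (- g) ⊙ f = - (g ⊙ f).
Proof. by apply: (addrI (g ⊙ f)); rewrite -compDl !subrr comp0m. Qed.

Lemma compNr (X Y Z : C) (g : mor Y Z) (f : mor X Y) : g ⊙ (- f) = - (g ⊙ f).
Proof. by apply: (addrI (g ⊙ f)); rewrite -compDr !subrr compm0. Qed.

Lemma compBl (X Y Z : C) (g1 g2 : mor Y Z) (f : mor X Y) :
  (g1 - g2) ⊙ f = g1 ⊙ f - g2 ⊙ f.
Proof. by rewrite compDl compNl. Qed.

Lemma compBr (X Y Z : C) (g : mor Y Z) (f1 f2 : mor X Y) :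
  g ⊙ (f1 - f2) = g ⊙ f1 - g ⊙ f2.
Proof. by rewrite compDr compNr. Qed.

Lemma mor_to_zero_obj (Z X : C) (m : mor X Z) : is_zero_obj Z -> m = 0.
Proof. by move=> hZ; rewrite -(comp1m m) hZ comp0m. Qed.

Definition monic (X Y : C) (m : mor X Y) : Prop :=
  forall (T : C) (u v : mor T X), m ⊙ u = m ⊙ v -> u = v.

Definition epic (X Y : C) (e : mor X Y) : Prop :=
  forall (T : C) (u v : mor Y T), u ⊙ e = v ⊙ e -> u = v.

Lemma kernel_monic (X Y K : C) (f : mor X Y) (k : mor K X) :
  is_kernel f k -> monic k.
Proof.
move=> [hk0 hk] T u v e.
have [|w [_ hw]] := hk T (k ⊙ u); first by rewrite compA hk0 comp0m.
by rewrite (hw u erefl) (hw v (esym e)).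
Qed.

Lemma cokernel_epic (X Y Q : C) (f : mor X Y) (c : mor Y Q) :
  is_cokernel f c -> epic c.
Proof.
move=> [hc0 hc] T u v e.
have [|w [_ hw]] := hc T (u ⊙ c); first by rewrite -compA hc0 compm0.
by rewrite (hw u erefl) (hw v (esym e)).
Qed.

Lemma kernel_comp_monic (X Y Y' K : C) (f : mor X Y) (m : mor Y Y') (k : mor K X) :
  monic m -> is_kernel (m ⊙ f) k <-> is_kernel f k.
Proof.
move=> hm.
have vanish T (t : mor T X) : (m ⊙ f) ⊙ t = 0 <-> f ⊙ t = 0.
  rewrite -compA; split=> [e|->]; last exact: compm0.
  by apply: hm; rewrite e compm0.
split=> -[/vanish hk0 hk]; split=> // T t /vanish; exact: hk.
Qed.

Lemma cokernel_comp_epic (X' X Y Q : C) (e : mor X' X) (f : mor X Y) (c : mor Y Q) :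
  epic e -> is_cokernel (f ⊙ e) c <-> is_cokernel f c.
Proof.
move=> he.
have vanish T (t : mor Y T) : t ⊙ (f ⊙ e) = 0 <-> t ⊙ f = 0.
  rewrite compA; split=> [h|->]; last exact: comp0m.
  by apply: he; rewrite h comp0m.
split=> -[/vanish hc0 hc]; split=> // T t /vanish; exact: hc.
Qed.

Section Biproduct.
Variables (X Y W : C) (i1 : mor X W) (i2 : mor Y W) (p1 : mor W X) (p2 : mor W Y).

Definition is_biproduct : Prop :=
  [/\ p1 ⊙ i1 = idm X, p2 ⊙ i2 = idm Y & i1 ⊙ p1 + i2 ⊙ p2 = idm W].

Hypothesis hW : is_biproduct.

Lemma biproduct_into (T : C) (x : mor T W) : i1 ⊙ (p1 ⊙ x) + i2 ⊙ (p2 ⊙ x) = x.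
Proof. by case: hW => _ _ e; rewrite !compA -compDl e comp1m. Qed.

Lemma biproduct_out (T : C) (x : mor W T) : x ⊙ i1 ⊙ p1 + x ⊙ i2 ⊙ p2 = x.
Proof. by case: hW => _ _ e; rewrite -!compA -compDr e compm1. Qed.

Lemma biproduct_p1i2 : p1 ⊙ i2 = 0.
Proof.
have [h1 h2 _] := hW; apply: (addrI (p1 ⊙ i2)).
by rewrite addr0 -{3}(biproduct_into i2) h2 compm1 compDr compA h1 comp1m.
Qed.

End Biproduct.

Lemma is_biproductC (X Y W : C) (i1 : mor X W) (i2 : mor Y W) (p1 : mor W X) (p2 : mor W Y) :
  is_biproduct i1 i2 p1 p2 -> is_biproduct i2 i1 p2 p1.
Proof. by case=> h1 h2 h3; split; rewrite // addrC. Qed.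

Lemma biproduct_p2i1 (X Y W : C) (i1 : mor X W) (i2 : mor Y W) (p1 : mor W X) (p2 : mor W Y) :
  is_biproduct i1 i2 p1 p2 -> p2 ⊙ i1 = 0.
Proof. by move/is_biproductC; apply: biproduct_p1i2. Qed.

End AdditiveCategory.

Section Pushouts.
Variable C : AddCat.

Lemma pushout_paste (X I Y A R P : C) (d : mor X I) (g : mor X A) (g1 : mor I R)
    (r : mor A R) (i : mor I Y) (b : mor Y P) (a : mor R P) :
  is_pushout d g g1 r -> is_pushout i g1 b a -> is_pushout (i ⊙ d) g b (a ⊙ r).
Proof.
move=> [e1 po1] [e2 po2]; split; first by rewrite compA e2 -compA e1 compA.
move=> T x y hxy.
have [|w [[hw1 hw2] wq]] := po1 T (x ⊙ i) y; first by rewrite -compA.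
have [u [[hu1 hu2] uq]] := po2 T x w (esym hw1).
exists u; split; first by rewrite compA hu2.
move=> u' [h1 h2]; apply: uq; split=> //; apply: wq.
by rewrite -compA -e2 compA h1 -compA.
Qed.

Lemma pushout_jointly_epic (X Y A P T : C) (a : mor X Y) (b : mor X A) (b' : mor Y P)
    (a' : mor A P) (u v : mor P T) :
  is_pushout a b b' a' -> u ⊙ b' = v ⊙ b' -> u ⊙ a' = v ⊙ a' -> u = v.
Proof.
move=> [hba po] e1 e2.
have [|w [_ wq]] := po T (u ⊙ b') (u ⊙ a'); first by rewrite -!compA hba.
by rewrite (wq u (conj erefl erefl)) (wq v (conj (esym e1) (esym e2))).
Qed.

Lemma pushout_cokernel (X Y A P Q : C) (a : mor X Y) (b : mor X A) (b' : mor Y P)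
    (a' : mor A P) (c : mor Y Q) :
  is_pushout a b b' a' -> is_cokernel a c -> exists c' : mor P Q, is_cokernel a' c'.
Proof.
move=> hpo [hc0 hc]; have [hba po] := hpo.
have [|c' [[hc1 hc2] _]] := po Q c 0; first by rewrite hc0 comp0m.
exists c'; split=> // T t ht.
have [|w [hw wq]] := hc T (t ⊙ b'); first by rewrite -compA hba compA ht comp0m.
exists w; split; last by move=> w' hw'; apply: wq; rewrite -hw' -compA hc1.
by apply: (pushout_jointly_epic hpo); rewrite -compA ?hc1 ?hc2 ?compm0.
Qed.

Lemma cokernel_square_pushout (K X I A'' A R : C) (k : mor K X) (d : mor X I)
    (g : mor X A) (e : mor K A'') (j : mor A'' A) (r : mor A R) :
  is_cokernel k d -> is_cokernel j r -> epic e -> g ⊙ k = j ⊙ e ->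
  exists g1 : mor I R, is_pushout d g g1 r.
Proof.
move=> hd hr he egk.
have [|g1 [hg1 _]] := hd.2 R (r ⊙ g); first by rewrite -compA egk compA hr.1 comp0m.
exists g1; split=> // T x y hxy.
have [|y1 [hy1 y1q]] := hr.2 T y.
  by apply: he; rewrite -compA -egk compA -hxy -compA hd.1 !compm0 comp0m.
exists y1; split; last by move=> u' [_ /y1q].
split=> //; apply: (cokernel_epic hd).
by rewrite -compA hg1 compA hy1.
Qed.

End Pushouts.

Section Twist.
Variable C : AddCat.
Variables (I Y R W1 W2 : C) (i : mor I Y) (g : mor I R).
Variables (u1 : mor I W1) (u2 : mor R W1) (p1 : mor W1 I) (p2 : mor W1 R).
Variables (v1 : mor Y W2) (v2 : mor R W2) (s1 : mor W2 Y) (s2 : mor W2 R).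
Hypotheses (hW1 : is_biproduct u1 u2 p1 p2) (hW2 : is_biproduct v1 v2 s1 s2).

(* The matrix [[i, 0], [-g, 1]] : I ⊕ R → Y ⊕ R. *)
Definition twist : mor W1 W2 := v1 ⊙ i ⊙ p1 + v2 ⊙ (p2 - g ⊙ p1).

Lemma twist_in1 : twist ⊙ u1 = v1 ⊙ i - v2 ⊙ g.
Proof.
have [h1 _ _] := hW1; have o21 := biproduct_p2i1 hW1.
by rewrite compDl -!compA compBl -!compA h1 o21 !compm1 sub0r compNr.
Qed.

Lemma twist_in2 : twist ⊙ u2 = v2.
Proof.
have [_ h2 _] := hW1; have o12 := biproduct_p1i2 hW1.
by rewrite compDl -!compA compBl -!compA o12 h2 !compm0 subr0 compm1 add0r.
Qed.

Lemma proj1_twist : s1 ⊙ twist = i ⊙ p1.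
Proof.
have [h1 _ _] := hW2; have o12 := biproduct_p1i2 hW2.
by rewrite compDr !compA h1 o12 comp0m addr0 comp1m.
Qed.

Lemma proj2_twist : s2 ⊙ twist = p2 - g ⊙ p1.
Proof.
have [_ h2 _] := hW2; have o21 := biproduct_p2i1 hW2.
by rewrite compDr !compA h2 o21 !comp0m add0r comp1m.
Qed.

Lemma twist_kernel (D : C) (q : mor Y D) : is_kernel q i -> is_kernel (q ⊙ s1) twist.
Proof.
move=> [hq0 hq]; split; first by rewrite -compA proj1_twist compA hq0 comp0m.
move=> T t ht.
have [|w [hw wq]] := hq T (s1 ⊙ t); first by rewrite compA.
exists (u1 ⊙ w + u2 ⊙ (s2 ⊙ t + g ⊙ w)); split.
  rewrite compDr !compA twist_in1 twist_in2 compBl compDr -!compA hw.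
  by rewrite addrACA addNr addr0 biproduct_into.
move=> u' hu'.
have hp1 : p1 ⊙ u' = w by apply: wq; rewrite -hu' [RHS]compA proj1_twist compA.
have hp2 : p2 ⊙ u' = s2 ⊙ t + g ⊙ w.
  by rewrite -hu' compA proj2_twist compBl -compA hp1 subrK.
by rewrite -hp2 -hp1 biproduct_into.
Qed.

Lemma twist_pushout (P : C) (b : mor W2 P) (a : mor R P) :
  is_pushout twist p2 b a -> is_pushout i g (b ⊙ v1) a.
Proof.
move=> [hba po]; have [_ pu2 _] := hW1; have [sv1 _ _] := hW2.
have bv2 : b ⊙ v2 = a by rewrite -twist_in2 compA hba -compA pu2 compm1.
have bv1i : b ⊙ v1 ⊙ i = a ⊙ g.
  apply/eqP; rewrite -subr_eq0 -bv2 -!compA -compBr -twist_in1 compA hba.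
  by rewrite -compA (biproduct_p2i1 hW1) compm0.
split=> // T x y hxy.
have [|u [[hu1 hu2] uq]] := po T (x ⊙ s1 + y ⊙ s2) y.
  by rewrite compDl -!compA proj1_twist proj2_twist compBr !compA hxy addrC subrK.
exists u; split.
  split=> //; rewrite compA hu1 compDl -!compA sv1 (biproduct_p2i1 hW2).
  by rewrite compm1 compm0 addr0.
move=> u' [h1 h2]; apply: uq; split=> //.
by rewrite -(biproduct_out hW2 (u' ⊙ b)) -!(compA u' b) bv2 h1 h2.
Qed.

End Twist.

Section ConflationCategory.
Variable C : ConfCat.

Lemma iso_idm (X : C) : is_iso (idm X).
Proof. by exists (idm X); rewrite comp1m. Qed.

Lemma inflation_monic (A B : C) (i : mor A B) : inflation i -> monic i.
Proof. by move=> [D [p /conf_kc [hk _]]]; apply: kernel_monic hk. Qed.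

Lemma deflation_epic (B D : C) (p : mor B D) : deflation p -> epic p.
Proof. by move=> [A [i /conf_kc [_ hc]]]; apply: cokernel_epic hc. Qed.

Lemma conf_kernel (A B D K : C) (i : mor A B) (p : mor B D) (k : mor K B) :
  conf i p -> is_kernel p k -> conf k p.
Proof.
move=> H hk'; have [hk _] := conf_kc H.
have [|u [hu _]] := hk.2 K k; first exact: hk'.1.
have [|v [hv _]] := hk'.2 A i; first exact: hk.1.
apply: (conf_iso (a := v) (b := idm B) (d := idm D) H).
- exists u; split.
  + by apply: (kernel_monic hk); rewrite compA hu hv compm1.
  + by apply: (kernel_monic hk'); rewrite compA hv hu compm1.
- exact: iso_idm.
- exact: iso_idm.
- by rewrite comp1m hv.
- by rewrite comp1m compm1.
Qed.

Lemma deflation_comp_iso (B D B' : C) (p : mor B D) (b : mor B' B) :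
  deflation p -> is_iso b -> deflation (p ⊙ b).
Proof.
move=> [K [i H]] [b' [h1 h2]]; exists K, (b' ⊙ i).
apply: (conf_iso (a := idm K) (b := b') (d := idm D) H).
- exact: iso_idm.
- by exists b.
- exact: iso_idm.
- by rewrite compm1.
- by rewrite comp1m -compA h2 compm1.
Qed.

End ConflationCategory.

Section Percolating.
Variables (C : ConfCat) (inA : C -> Prop).
Hypotheses (HC : deflation_exact C) (HA : adm_defl_percolating inA).

(* Factor [0 : X → A0] by (A2): a deflation that is zero has a zero target. *)
Lemma deflation_to_zero (X : C) :
  exists (Z : C) (t : mor X Z), is_zero_obj Z /\ deflation t.
Proof.
have [[A0 hA0] [_ [A2 _]]] := HA.
have [Z [d [i [hd hi _ e]]]] := A2 X A0 0 hA0.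
have d0 : d = 0 by apply: (inflation_monic hi); rewrite -e compm0.
subst d; exists Z, 0; split=> //.
by apply: (deflation_epic hd); rewrite compm0 comp0m.
Qed.

(* [p2] is the pullback of the deflation [X ↠ 0] along [Y → 0]. *)
Lemma biproduct_proj2_deflation (X Y W : C) (i1 : mor X W) (i2 : mor Y W)
    (p1 : mor W X) (p2 : mor W Y) :
  is_biproduct i1 i2 p1 p2 -> deflation p2.
Proof.
move=> hW; have [h1 h2 h3] := hW.
have [Z [t [hZ ht]]] := deflation_to_zero X.
have [_ [_ R2]] := HC.
have [B' [f' [p' [[hpb po] hp']]]] := R2 X Z Y t 0 ht.
have [|u [[hu1 hu2] _]] := po W p1 p2.
  by rewrite (mor_to_zero_obj (t ⊙ p1) hZ) (mor_to_zero_obj (0 ⊙ p2) hZ).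
rewrite -hu2; apply: deflation_comp_iso => //.
exists (i1 ⊙ f' + i2 ⊙ p'); split; first by rewrite compDl -!compA hu1 hu2 h3.
have [w [_ uq]] := po B' f' p' hpb.
rewrite (uq (idm B')); last by rewrite !compm1.
apply: uq; rewrite !compA hu1 hu2 !compDr !compA h1 h2 (biproduct_p1i2 hW).
by rewrite (biproduct_p2i1 hW) !comp0m !comp1m addr0 add0r.
Qed.

Lemma biproduct_proj1_deflation (X Y W : C) (i1 : mor X W) (i2 : mor Y W)
    (p1 : mor W X) (p2 : mor W Y) :
  is_biproduct i1 i2 p1 p2 -> deflation p1.
Proof. by move/is_biproductC; apply: biproduct_proj2_deflation. Qed.

Lemma twist_inflation (I Y R W1 W2 : C) (i : mor I Y) (g : mor I R)
    (u1 : mor I W1) (u2 : mor R W1) (p1 : mor W1 I) (p2 : mor W1 R)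
    (v1 : mor Y W2) (v2 : mor R W2) (s1 : mor W2 Y) (s2 : mor W2 R) :
  is_biproduct u1 u2 p1 p2 -> is_biproduct v1 v2 s1 s2 -> inflation i ->
  inflation (twist i g p1 p2 v1 v2).
Proof.
move=> hW1 hW2 [D [q hiq]].
have [_ [R1 _]] := HC.
have hqs1 : deflation (q ⊙ s1).
  by apply: R1; [exact: biproduct_proj1_deflation hW2 | exists I, i].
have [K [k hk]] := hqs1.
exists D, (q ⊙ s1); apply: conf_kernel hk _.
exact (twist_kernel g hW1 hW2 (conf_kc hiq).1).
Qed.

Lemma pushout_inflation_into_A (I Y R : C) (i : mor I Y) (g : mor I R) :
  inflation i -> inA R ->
  exists (P : C) (b : mor Y P) (a : mor R P), is_pushout i g b a /\ inflation a.
Proof.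
move=> hi hR.
have [W1 [u1 [u2 [p1 [p2 hW1]]]]] := biprod_ex I R.
have [W2 [v1 [v2 [s1 [s2 hW2]]]]] := biprod_ex Y R.
have [_ [_ [_ A3]]] := HA.
have [|P [b [a [hpo _ ha]]]] := A3 _ _ _ _ p2 (twist_inflation g hW1 hW2 hi) _ hR.
  exact: biproduct_proj2_deflation hW1.
by exists P, (b ⊙ v1), a; split; first exact (twist_pushout hW1 hW2 hpo).
Qed.

End Percolating.

Theorem mainTheorem8 (C : ConfCat) (inA : C -> Prop)
  (HC : deflation_exact C) (HA : adm_defl_percolating inA)
  (X Y A : C) (f : mor X Y) (g : mor X A)
  (Hf : admissible f) (HfA : ker_coker_in inA f) (HAin : inA A) :
  exists (P : C) (g' : mor Y P) (f' : mor A P),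
    [/\ is_pushout f g g' f', admissible f' & ker_coker_in inA f'].
Proof.
have [_ [A1 [A2 _]]] := HA.
have [_ [Q [c [hc hQ]]]] := HfA.
have [I [d [i [hd [hi ef]]]]] := Hf; subst f.
have [K [k /conf_kc [_ hkd]]] := hd.
have [A'' [e [j [he hj hA'' egk]]]] := A2 _ _ (g ⊙ k) HAin.
have [R [r hjr]] := hj.
have hR : inA R := (proj1 (A1 _ _ _ _ _ hjr) HAin).2.
have [hjk hjc] := conf_kc hjr.
have hr : deflation r by exists A'', j.
have [g1 hsq] := cokernel_square_pushout hkd hjc (deflation_epic he) egk.
have [P [b [a [hpo ha]]]] := pushout_inflation_into_A HC HA g1 hi hR.
have hci : is_cokernel i c := (cokernel_comp_epic _ _ (deflation_epic hd)).1 hc.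
have [c' hc'] := pushout_cokernel hpo hci.
exists P, b, (a ⊙ r); split.
- exact: pushout_paste hsq hpo.
- by exists R, r, a.
- split.
  + by exists A'', j; split; first apply/(kernel_comp_monic _ _ (inflation_monic ha)).
  + by exists Q, c'; split; first apply/(cokernel_comp_epic _ _ (deflation_epic hr)).
Qed.
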